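(* Let $r\ge 3$ and let $\mathbb{P}^m_r$ be an $r$-uniform hyperpath with $m$ edges. Then $\lambda(\mathbb{P}^m_r)=2r-2$ if $m=1$, $\lambda(\mathbb{P}^m_r)=2r-1$ if $m=2$, and $\lambda(\mathbb{P}^m_r)=2r$ if $m\ge 3$.
   Context: An $r$-uniform hypergraph (every edge has exactly $r$ vertices) with $m$ edges is a hyperpath $\mathbb{P}^m_r$ if its edges can be ordered $e_1,\dots,e_m$ and there are vertices $v_1,\dots,v_{m-1}$ such that for $1\le i<j\le m$, $e_i\cap e_j=\emptyset$ if $j\ne i+1$ and $e_i\cap e_{i+1}=\{v_i\}$; its vertex set is the union of its edges. An $L(2,1)$-colouring of a hypergraph $\mathbb{H}=(V,E)$ is a map $f:V\to\mathbb{Z}_{\ge 0}$ such that $|f(u)-f(v)|\ge 2$ whenever $u\ne v$ lie in a common edge, and $|f(u)-f(v)|\ge 1$ whenever there are edges $e_1\ni v$, $e_2\ni u$ with $(e_1\cap e_2)\setminus\{u,v\}\ne\emptyset$. Its span is $\max f-\min f$, and $\lambda(\mathbb{H})$ is the minimum span. *)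

From mathcomp Require Import all_boot.
Set Implicit Arguments. Unset Strict Implicit. Unset Printing Implicit Defensive.

Definition covers (V : finType) (m : nat) (e : 'I_m -> {set V}) : Prop :=
  forall v : V, exists i : 'I_m, v \in e i.

Definition uniform (V : finType) (m r : nat) (e : 'I_m -> {set V}) : Prop :=
  forall i : 'I_m, #|e i| = r.

Definition hyperpath_order (V : finType) (m : nat) (e : 'I_m -> {set V}) : Prop :=
  forall i j : 'I_m, i < j ->
    (j != i.+1 :> nat -> e i :&: e j = set0) /\
    (j = i.+1 :> nat -> exists v : V, e i :&: e j = [set v]).

Definition is_hyperpath (V : finType) (m r : nat) (E : {set {set V}}) : Prop :=
  #|E| = m /\ (forall A, A \in E -> #|A| = r) /\
  (forall v : V, exists2 A, A \in E & v \in A) /\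
  exists e : 'I_m -> {set V}, (forall i, e i \in E) /\ injective e /\
    hyperpath_order e.

Definition natdist (a b : nat) : nat := (a - b) + (b - a).

Definition L21 (V : finType) (E : {set {set V}}) (f : V -> nat) : Prop :=
  (forall u v : V, u != v -> (exists2 A, A \in E & (u \in A) && (v \in A)) ->
     2 <= natdist (f u) (f v)) /\
  (forall u v : V, u != v ->
     (exists e1 e2, [/\ e1 \in E, e2 \in E, v \in e1, u \in e2 &
                       (e1 :&: e2) :\: [set u; v] != set0]) ->
     1 <= natdist (f u) (f v)).

Definition fmax (V : finType) (f : V -> nat) : nat := \max_(v : V) f v.
Definition fmin (V : finType) (f : V -> nat) : nat :=
  \big[minn/fmax f]_(v : V) f v.
Definition span (V : finType) (f : V -> nat) : nat := fmax f - fmin f.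

Definition is_lambda (V : finType) (E : {set {set V}}) (k : nat) : Prop :=
  (exists f : V -> nat, L21 E f /\ span f = k) /\
  (forall f : V -> nat, L21 E f -> k <= span f).

(* Colours within an edge are pairwise at least 2 apart, so halving them is injective on an edge:
   this gives the bound 2r-2. With all colours below 2r, each edge takes exactly one colour from
   every pair {2j, 2j+1}, and once it takes the odd colour of a pair it takes the odd colour of
   every later pair. Consecutive edges share only the colour of their common vertex w, so their
   parity choices are complementary except at the pair of w. If no odd colour is available
   (colours at most 2r-2) this is impossible for two edges. For three edges the middle one is
   complementary to each neighbour except at two different pairs; monotonicity forces its
   parities to be constant and both exceptional pairs to sit at the same end, a contradiction.
   The matching colourings are given by explicit tables, 4-periodic along the path when m >= 3. *)

From mathcomp Require Import all_boot zify.
Set Implicit Arguments. Unset Strict Implicit. Unset Printing Implicit Defensive.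

Ltac case_eqs := repeat match goal with |- context [?a == ?b] => case: (a =P b) => ? /= end.

Lemma natdistC a b : natdist a b = natdist b a.
Proof. by rewrite /natdist addnC. Qed.

Lemma natdist_subn a b c : c <= a -> c <= b -> natdist (a - c) (b - c) = natdist a b.
Proof. rewrite /natdist; lia. Qed.

Lemma fmin_le (V : finType) (f : V -> nat) v : fmin f <= f v.
Proof.
rewrite /fmin; have : v \in index_enum V by rewrite mem_index_enum.
elim: (index_enum V) => [|a s IH] //; rewrite inE big_cons => /orP [/eqP <- | vs].
  exact: geq_minl.
exact: leq_trans (geq_minr _ _) (IH vs).
Qed.

Lemma L21_subn (V : finType) (E : {set {set V}}) f c :
  (forall v, c <= f v) -> L21 E f -> L21 E (fun v => f v - c).
Proof.
by move=> cf [L2 L1]; split=> u v uv uvE; rewrite natdist_subn //; [apply: L2 | apply: L1].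
Qed.

Lemma is_lambda_intro (V : finType) (E : {set {set V}}) k :
  (forall g b, L21 E g -> (forall v, g v <= b) -> k <= b) ->
  (exists2 g, L21 E g & forall v, g v <= k) ->
  is_lambda E k.
Proof.
move=> lb [g Lg gk].
have span_lb f : L21 E f -> k <= span f.
  move=> Lf; apply: (lb _ _ (L21_subn (@fmin_le _ f) Lf)) => v.
  by apply: leq_sub2r; apply: leq_bigmax.
split=> //; exists g; split=> //; apply/eqP; rewrite eqn_leq span_lb // andbT.
by apply: leq_trans (leq_subr _ _) _; apply/bigmax_leqP => v _.
Qed.

Lemma imset_card_eq (T U : finType) (f : T -> U) (E : {set U}) :
  injective f -> #|E| = #|T| -> (forall x, f x \in E) -> E = [set f x | x : T].
Proof.
move=> f_inj cardE fE; apply/eqP; rewrite eq_sym eqEcard card_imset // cardE leqnn andbT.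
by apply/subsetP => _ /imsetP [x _ ->].
Qed.

Section Hyperpath.
Variables (V : finType) (m : nat) (e : 'I_m -> {set V}).
Hypothesis e_path : hyperpath_order e.

Definition edge (n : nat) : {set V} :=
  if (insub n : option 'I_m) is Some i then e i else set0.

Lemma edge_ord (i : 'I_m) : edge i = e i.
Proof. by rewrite /edge valK. Qed.

Lemma edge_default n : m <= n -> edge n = set0.
Proof. by move=> h; rewrite /edge insubF // ltnNge h. Qed.

Lemma edge_lt i v : v \in edge i -> i < m.
Proof. by case: (ltnP i m) => // h; rewrite edge_default ?inE. Qed.

Lemma edgeI_far i j : i < j -> j != i.+1 -> edge i :&: edge j = set0.
Proof.
move=> ij ji; case: (ltnP j m) => jm; last by rewrite (edge_default jm) setI0.
have im : i < m by apply: ltn_trans jm.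
rewrite -[i]/(val (Ordinal im)) -[j]/(val (Ordinal jm)) !edge_ord.
exact: (@e_path (Ordinal im) (Ordinal jm) ij).1.
Qed.

Lemma edgeI_next i : i.+1 < m -> exists w, edge i :&: edge i.+1 = [set w].
Proof.
move=> im; have im' : i < m by apply: ltnW.
rewrite -[i]/(val (Ordinal im')) -[i.+1]/(val (Ordinal im)) !edge_ord.
exact: (@e_path (Ordinal im') (Ordinal im) (ltnSn i)).2.
Qed.

Lemma edge_common i j v : v \in edge i -> v \in edge j -> [\/ i = j, j = i.+1 | i = j.+1].
Proof.
move=> vi vj.
have far k l : k < l -> l != k.+1 -> v \in edge k -> v \in edge l -> False.
  by move=> kl lk vk vl; have := edgeI_far kl lk; move/setP/(_ v); rewrite !inE vk vl.
case: (ltngtP i j) => [ij|ji|->]; last by constructor 1.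
  by case: (eqVneq j i.+1) => [->|ji]; [constructor 2 | case: (far i j)].
by case: (eqVneq i j.+1) => [->|ij]; [constructor 3 | case: (far j i)].
Qed.

Definition path_L21 (g : V -> nat) : Prop :=
  (forall i u v, u != v -> u \in edge i -> v \in edge i -> 2 <= natdist (g u) (g v)) /\
  (forall i u v, u != v -> u \in edge i -> v \in edge i.+1 -> 1 <= natdist (g u) (g v)).

Lemma L21_pathP (E : {set {set V}}) g :
  E = [set e i | i : 'I_m] -> L21 E g <-> path_L21 g.
Proof.
move=> ->; split=> [[L2 L1] | [P2 P1]].
  have P2 i u v : u != v -> u \in edge i -> v \in edge i -> 2 <= natdist (g u) (g v).
    move=> uv ui vi; have im := edge_lt ui; apply: L2 uv _.
    by exists (e (Ordinal im)); rewrite ?imset_f // -edge_ord ui vi.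
  split=> // i u v uv ui vi; have im := edge_lt vi; have im' := edge_lt ui.
  have [w wE] := edgeI_next im.
  have /setIP [wi wi'] : w \in edge i :&: edge i.+1 by rewrite wE set11.
  case: (eqVneq w u) => [wu | wu]; first by rewrite wu in wi'; have := P2 _ _ _ uv wi' vi; lia.
  case: (eqVneq w v) => [wv | wv]; first by rewrite wv in wi; have := P2 _ _ _ uv ui wi; lia.
  apply: L1 uv _; exists (e (Ordinal im)), (e (Ordinal im')).
  rewrite !imset_f // -!edge_ord; split=> //; apply/set0Pn; exists w.
  by rewrite !inE wi wi' (negbTE wu) (negbTE wv).
split=> [u v uv [_ /imsetP [i _ ->] /andP [ui vi]] |].
  by apply: (P2 i) => //; rewrite edge_ord.
move=> u v uv [_ [_ [/imsetP [i _ ->] /imsetP [j _ ->] vi uj]]].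
case/set0Pn => x; rewrite !inE negb_or -!edge_ord => /andP [/andP [xu xv] /andP [xi xj]].
rewrite -!edge_ord in vi uj.
case: (edge_common xi xj) => [ij | ji | ij].
- by have := P2 i u v uv; rewrite ij uj -ij vi => /(_ isT isT); lia.
- by rewrite natdistC; apply: (P1 i); rewrite 1?eq_sym // -ji.
- by apply: (P1 j) => //; rewrite -ij.
Qed.

End Hyperpath.

Lemma card_edge (V : finType) (m r : nat) (e : 'I_m -> {set V}) i :
  (forall i, #|e i| = r) -> i < m -> #|edge e i| = r.
Proof. by move=> e_card im; rewrite -[i]/(val (Ordinal im)) edge_ord. Qed.

Definition up_closed (r : nat) (a : nat -> bool) : Prop :=
  forall j, j.+1 < r -> a j -> a j.+1.

Section UpClosed.
Variable r : nat.

Lemma up_closed_le a j k : up_closed r a -> j <= k -> k < r -> a j -> a k.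
Proof.
move=> a_up; elim: k => [|k IH] jk kr aj; first by move: jk; rewrite leqn0 => /eqP <-.
move: jk; rewrite leq_eqVlt => /orP [/eqP <- // | jk].
by apply: a_up => //; apply: IH => //; lia.
Qed.

Lemma up_closed_compl_const j0 a b : up_closed r a -> up_closed r b ->
  (forall j, j < r -> j != j0 -> a j = ~~ b j) ->
  forall j k, j < r -> k < r -> j != j0 -> k != j0 -> b j = b k.
Proof.
move=> a_up b_up ab.
suff le_eq j k : j <= k -> k < r -> j != j0 -> k != j0 -> b j = b k.
  by move=> j k jr kr ??; case: (leqP j k) => [jk | /ltnW kj]; [|symmetry]; apply: le_eq.
move=> jk kr jj kj; apply/idP/idP => [|bk]; first exact: up_closed_le jk kr.
apply/negPn/negP => /negbTE bj; have aj : a j by rewrite ab ?bj //; lia.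
by move: (up_closed_le a_up jk kr aj); rewrite ab // bk.
Qed.

Lemma up_closed_exception_end j0 a beta : up_closed r a -> j0 < r ->
  (forall j, j < r -> a j = if j == j0 then beta else ~~ beta) ->
  j0 = if beta then r.-1 else 0.
Proof.
move=> a_up j0r aE; have aj0 : a j0 = beta by rewrite aE // eqxx.
case: beta aE aj0 => aE aj0; apply/eqP/negPn/negP => j0ne.
  have := up_closed_le a_up (_ : j0 <= r.-1) (_ : r.-1 < r) aj0.
  by rewrite aE ?ifN_eqC //; lia.
have := up_closed_le a_up (leq0n j0) j0r; rewrite aj0 aE ?ifN_eqC //; lia.
Qed.

Lemma up_closed_no_two_flips j0 j1 a b c : 2 < r -> j0 < r -> j1 < r -> j0 != j1 ->
  up_closed r a -> up_closed r b -> up_closed r c ->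
  (forall j, j < r -> j != j0 -> a j = ~~ b j) -> a j0 = b j0 ->
  (forall j, j < r -> j != j1 -> c j = ~~ b j) -> c j1 = b j1 -> False.
Proof.
move=> r2 j0r j1r j01 a_up b_up c_up ab abj0 cb cbj1.
have [k [kr kj0 kj1]] : exists k, [/\ k < r, k != j0 & k != j1].
  exists (if (j0 != 0) && (j1 != 0) then 0 else if (j0 != 1) && (j1 != 1) then 1 else 2).
  by case_eqs; split; lia.
have b_const j : j < r -> b j = b k.
  move=> jr; case: (eqVneq j j0) => [jj0 | jj0].
    by apply: (up_closed_compl_const c_up b_up cb) => //; rewrite jj0.
  exact: (up_closed_compl_const a_up b_up ab).
have flip_end d j2 : up_closed r d -> j2 < r ->
    (forall j, j < r -> j != j2 -> d j = ~~ b j) -> d j2 = b j2 ->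
    j2 = if b k then r.-1 else 0.
  move=> d_up j2r db dbj2; apply: (up_closed_exception_end d_up j2r) => j jr.
  by case: eqP => [-> | /eqP jj2]; [rewrite dbj2 b_const | rewrite db // b_const].
by move: j01; rewrite (flip_end a j0) // (flip_end c j1) // eqxx.
Qed.

End UpClosed.

Lemma card_inj_bounded (T : finType) (S : {set T}) (h : T -> nat) n :
  {in S &, injective h} -> (forall v, v \in S -> h v < n) ->
  #|S| <= n /\ (#|S| = n -> forall j, j < n -> exists2 v, v \in S & h v = j).
Proof.
move=> h_inj h_lt.
have h_uniq : uniq (map h (enum S)).
  by rewrite map_inj_in_uniq ?enum_uniq // => x y; rewrite !mem_enum; apply: h_inj.
have h_sub : {subset map h (enum S) <= iota 0 n}.
  by move=> x /mapP [y]; rewrite mem_enum => yS ->; rewrite mem_iota add0n h_lt.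
have h_size : size (map h (enum S)) = #|S| by rewrite size_map cardE.
split; first by rewrite -h_size -(size_iota 0 n); apply: uniq_leq_size.
move=> Sn j jn.
have le_size : size (iota 0 n) <= size (map h (enum S)) by rewrite size_iota h_size Sn.
have [_ h_eq] := uniq_min_size h_uniq h_sub le_size.
have : j \in iota 0 n by rewrite mem_iota.
by rewrite -h_eq => /mapP [v]; rewrite mem_enum => vS ->; exists v.
Qed.

Section LowerBounds.
Variables (V : finType) (m r : nat) (e : 'I_m -> {set V}).
Hypotheses (e_path : hyperpath_order e) (e_card : forall i, #|e i| = r).
Variable g : V -> nat.
Hypothesis g_L21 : path_L21 e g.

Lemma half_colour_inj i : {in edge e i &, injective (fun v => g v %/ 2)}.
Proof.
move=> u v ui vi /= uv; apply/eqP/negPn/negP => /(g_L21.1 i u v)/(_ ui vi).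
by rewrite /natdist; lia.
Qed.

Lemma span_lb_one b : 0 < m -> (forall v, g v <= b) -> 2 * r - 2 <= b.
Proof.
move=> m0 g_le; have half_lt v : v \in edge e 0 -> g v %/ 2 < b %/ 2 + 1.
  by move=> _; have := g_le v; lia.
have [] := card_inj_bounded (@half_colour_inj 0) half_lt.
by rewrite (card_edge e_card m0); lia.
Qed.

Definition used i c := [exists v in edge e i, g v == c].

Lemma usedP i c : reflect (exists2 v, v \in edge e i & g v = c) (used i c).
Proof.
apply: (iffP exists_inP) => [[v vi /eqP gv] | [v vi gv]]; exists v => //.
exact/eqP.
Qed.

Lemma used_not_consecutive i c : ~~ (used i c && used i c.+1).
Proof.
apply/negP => /andP [/usedP [u ui gu] /usedP [v vi gv]].
have uv : u != v by apply/eqP => uv; move: gv; rewrite -uv gu; lia.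
by have := g_L21.1 i u v uv ui vi; rewrite gu gv /natdist; lia.
Qed.

Lemma used_adjacent i c w : edge e i :&: edge e i.+1 = [set w] ->
  used i c -> used i.+1 c -> c = g w.
Proof.
move=> wE /usedP [u ui gu] /usedP [v vi gv].
case: (eqVneq u v) => [uv | uv].
  suff -> : w = u by [].
  by apply/esym/set1P; rewrite -wE inE ui uv vi.
by have := g_L21.2 i u v uv ui vi; rewrite gu gv /natdist; lia.
Qed.

(* Below [2 * r], an edge uses exactly one colour of each pair [{2j, 2j+1}] ([used_slot]);
   [odd_slot i j] says that edge [i] uses the odd one. *)
Definition odd_slot i j := used i (2 * j).+1.

Lemma odd_slot_meet i w : i.+1 < m -> edge e i :&: edge e i.+1 = [set w] ->
  odd_slot i.+1 (g w %/ 2) = odd_slot i (g w %/ 2).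
Proof.
move=> im wE; have /setIP [wi wi'] : w \in edge e i :&: edge e i.+1 by rewrite wE set11.
have ui : used i (g w) by apply/usedP; exists w.
have ui' : used i.+1 (g w) by apply/usedP; exists w.
have := modn2 (g w); rewrite /odd_slot; case: (odd (g w)) => /= gw2.
  by rewrite (_ : (2 * _).+1 = g w) ?ui ?ui' //; lia.
have := used_not_consecutive i (g w); have := used_not_consecutive i.+1 (g w).
by rewrite (_ : 2 * _ = g w) ?ui ?ui' //= => [/negbTE -> /negbTE ->|]; lia.
Qed.

Section BelowTwiceR.
Hypothesis g_lt : forall v, g v < 2 * r.

Lemma used_slot i j : i < m -> j < r -> used i (2 * j) || odd_slot i j.
Proof.
move=> im jr; have half_lt v : v \in edge e i -> g v %/ 2 < r by move=> _; have := g_lt v; lia.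
have [_ /(_ (card_edge e_card im) j jr) [v vi gv]] := card_inj_bounded (@half_colour_inj i) half_lt.
by apply/orP; case: (eqVneq (g v) (2 * j)) => gvj; [left | right]; apply/usedP; exists v => //; lia.
Qed.

Lemma odd_slot_up i : i < m -> up_closed r (odd_slot i).
Proof.
move=> im j jr oj; have := used_not_consecutive i (2 * j).+1.
have := used_slot im jr; rewrite /odd_slot in oj *.
by rewrite oj (_ : 2 * j.+1 = (2 * j).+2) //=; [case: (used i (2 * j).+2) | lia].
Qed.

Lemma odd_slot_flip i w j : i.+1 < m -> edge e i :&: edge e i.+1 = [set w] ->
  j < r -> j != g w %/ 2 -> odd_slot i.+1 j = ~~ odd_slot i j.
Proof.
move=> im wE jr jw; have im' : i < m by apply: ltnW.
have c_ne_w c : c %/ 2 = j -> c = g w -> False by move=> cj cw; move: jw; rewrite -cj cw eqxx.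
case oi: (odd_slot i j); case oi': (odd_slot i.+1 j) => //=.
  by case: (c_ne_w (2 * j).+1); [lia | exact: used_adjacent wE oi oi'].
have := used_slot im' jr; have := used_slot im jr; rewrite oi oi' !orbF => ui' ui.
by case: (c_ne_w (2 * j)); [lia | exact: used_adjacent wE ui ui'].
Qed.

End BelowTwiceR.

Lemma span_lb_two b : 1 < m -> 2 <= r -> (forall v, g v <= b) -> 2 * r - 1 <= b.
Proof.
move=> m1 r2 g_le; rewrite leqNgt; apply/negP => b_lt.
have g_lt v : g v < 2 * r by have := g_le v; lia.
have no_odd i j : i < m -> j < r -> odd_slot i j = false.
  move=> im jr; apply/negbTE/negP => oj.
  have : odd_slot i r.-1.
    by apply: (up_closed_le (odd_slot_up g_lt im) _ _ oj); lia.
  by case/usedP => v _ gv; have := g_le v; lia.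
have [w wE] := edgeI_next e_path m1.
have [j [jr jw]] : exists j, j < r /\ j != g w %/ 2.
  by exists (if g w %/ 2 == 0 then 1 else 0); case_eqs; split; lia.
by have := odd_slot_flip g_lt m1 wE jr jw; rewrite !no_odd //; lia.
Qed.

Lemma span_lb_three b : 2 < m -> 3 <= r -> (forall v, g v <= b) -> 2 * r <= b.
Proof.
move=> m2 r3 g_le; rewrite leqNgt; apply/negP => b_lt.
have g_lt v : g v < 2 * r by have := g_le v; lia.
have m1 : 1 < m by apply: ltnW.
have [w0 w0E] := edgeI_next e_path m1; have [w1 w1E] := edgeI_next e_path m2.
have /setIP [w0_0 w0_1] : w0 \in edge e 0 :&: edge e 1 by rewrite w0E set11.
have /setIP [w1_1 w1_2] : w1 \in edge e 1 :&: edge e 2 by rewrite w1E set11.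
have w01 : g w0 %/ 2 != g w1 %/ 2.
  apply/negP => /eqP /(half_colour_inj w0_1 w1_1) w01.
  by have := edgeI_far e_path (isT : 0 < 2) isT; move/setP/(_ w0); rewrite !inE w0_0 w01 w1_2.
have half_lt w : g w %/ 2 < r by have := g_lt w; lia.
apply: (up_closed_no_two_flips r3 (half_lt w0) (half_lt w1) w01 (odd_slot_up g_lt (ltnW m1))
  (odd_slot_up g_lt m1) (odd_slot_up g_lt m2)).
- by move=> j jr jw; rewrite (odd_slot_flip g_lt m1 w0E) ?negbK.
- by rewrite (odd_slot_meet m1 w0E).
- by move=> j jr jw; rewrite (odd_slot_flip g_lt m2 w1E).
- by rewrite (odd_slot_meet m2 w1E).
Qed.

End LowerBounds.

(* [T i s] is the colour given to slot [s] of edge [i]; slot [r - 2] is reserved for the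
   vertex shared with the previous edge and slot [r - 1] for the one shared with the next. *)
Definition colour_table (m r b : nat) (T : nat -> nat -> nat) : Prop :=
  [/\ forall i s t, i < m -> s < r -> t < r -> s != t -> 2 <= natdist (T i s) (T i t),
      forall i, i.+1 < m -> T i (r - 1) = T i.+1 (r - 2),
      forall i s t, i.+1 < m -> s < r -> t < r -> ~~ ((s == r - 1) && (t == r - 2)) ->
        T i s != T i.+1 t
    & forall i s, i < m -> s < r -> T i s <= b].

Section UpperBound.
Variables (V : finType) (m r : nat) (e : 'I_m -> {set V}).
Hypotheses (e_path : hyperpath_order e) (e_card : forall i, #|e i| = r) (r2 : 2 <= r).

Definition prev_edge i := if i is i'.+1 then edge e i' else set0.

Definition private_part i := edge e i :\: (prev_edge i :|: edge e i.+1).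

Definition slot i v :=
  if v \in prev_edge i then r - 2 else if v \in edge e i.+1 then r - 1 else
  let k := index v (enum (private_part i)) in k + ((0 < i) && (k == r - 2)).

Lemma card_edgeI_next i : #|edge e i :&: edge e i.+1| = (i.+1 < m).
Proof.
case: (ltnP i.+1 m) => im; first by have [w ->] := edgeI_next e_path im; rewrite cards1.
by rewrite (edge_default e im) setI0 cards0.
Qed.

Lemma edgeI_prev_next i : edge e i :&: prev_edge i :&: (edge e i :&: edge e i.+1) = set0.
Proof.
case: i => [|i] /=; first by rewrite setI0 set0I.
apply/setP => x; move/setP/(_ x): (edgeI_far e_path (leqW (ltnSn i)) (negbT (gtn_eqF (ltnSn i.+1)))).
by rewrite !inE; case: (x \in edge e i); case: (x \in edge e i.+2); rewrite ?andbF.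
Qed.

Lemma card_private i : i < m -> #|private_part i| + (0 < i) + (i.+1 < m) = r.
Proof.
move=> im; have := cardsID (prev_edge i :|: edge e i.+1) (edge e i).
rewrite (card_edge e_card im) setIUr cardsU edgeI_prev_next cards0 subn0 card_edgeI_next.
have -> : #|edge e i :&: prev_edge i| = (0 < i).
  by case: i im => [|i] im /=; rewrite ?setI0 ?cards0 // setIC card_edgeI_next im.
by rewrite /private_part; lia.
Qed.

Lemma prev_edge_pos i v : v \in prev_edge i -> 0 < i.
Proof. by case: i => //; rewrite inE. Qed.

Lemma slot_next i v : v \in edge e i -> v \in edge e i.+1 -> slot i v = r - 1.
Proof.
move=> vi vi'; rewrite /slot vi'; case: ifP => // vp.
by have := edgeI_prev_next i; move/setP/(_ v); rewrite !inE vi vi' vp.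
Qed.

Lemma slot_prev i v : v \in edge e i -> v \in edge e i.+1 -> slot i.+1 v = r - 2.
Proof. by move=> vi _; rewrite /slot /= vi. Qed.

Lemma slot_private i v : v \in private_part i ->
  slot i v = index v (enum (private_part i)) +
             ((0 < i) && (index v (enum (private_part i)) == r - 2)).
Proof. by rewrite /slot !inE negb_or => /andP [/andP [/negbTE -> /negbTE ->] _]. Qed.

Lemma slot_cases i v : v \in edge e i ->
  [\/ v \in prev_edge i /\ slot i v = r - 2,
      [/\ v \notin prev_edge i, v \in edge e i.+1 & slot i v = r - 1] |
      v \in private_part i].
Proof.
move=> vi; rewrite /slot; case: ifP => vp; first by constructor 1.
case: ifP => vn; first by constructor 2; rewrite ?vp.
by constructor 3; rewrite !inE vp vn vi.
Qed.

Lemma index_private_lt i v : v \in private_part i ->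
  index v (enum (private_part i)) < #|private_part i|.
Proof. by rewrite cardE index_mem mem_enum. Qed.

Lemma slot_lt i v : i < m -> v \in edge e i -> slot i v < r.
Proof.
move=> im vi; have := card_private im.
case: (slot_cases vi) => [[_ ->] | [_ _ ->] | vp]; try lia.
by rewrite slot_private //; have := index_private_lt vp; lia.
Qed.

Lemma slot_inj i : i < m -> {in edge e i &, injective (slot i)}.
Proof.
move=> im; have card_p := card_private im.
have meet_uniq j x y : x \in edge e j -> x \in edge e j.+1 ->
    y \in edge e j -> y \in edge e j.+1 -> x = y.
  move=> xj xj' yj yj'; have [w wE] := edgeI_next e_path (edge_lt xj').
  have /set1P -> : x \in [set w] by rewrite -wE inE xj xj'.
  by have /set1P -> : y \in [set w] by rewrite -wE inE yj yj'.
have prev_uniq x y : x \in prev_edge i -> y \in prev_edge i ->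
    x \in edge e i -> y \in edge e i -> x = y.
  case: i {im card_p} => [|i] /=; first by rewrite inE.
  by move=> xp yp xi yi; apply: meet_uniq xp xi yp yi.
have private_free x : x \in private_part i ->
    (0 < i -> slot i x != r - 2) /\ (i.+1 < m -> slot i x != r - 1).
  by move=> xp; rewrite slot_private //; have := index_private_lt xp; split; lia.
move=> u v ui vi.
case: (slot_cases ui) => [[up ->] | [up un ->] | up];
  case: (slot_cases vi) => [[vp ->] | [vp vn ->] | vp]; try lia.
- by move=> _; apply: prev_uniq.
- by have [/(_ (prev_edge_pos up))] := private_free v vp; rewrite eq_sym => /eqP.
- by move=> _; apply: meet_uniq un vi vn.
- by have [_ /(_ (edge_lt un))] := private_free v vp; rewrite eq_sym => /eqP.
- by have [/(_ (prev_edge_pos vp))] := private_free u up => /eqP.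
- by have [_ /(_ (edge_lt vn))] := private_free u up => /eqP.
rewrite !slot_private // => uv.
have : index u (enum (private_part i)) = index v (enum (private_part i)).
  by have := index_private_lt up; have := index_private_lt vp; move: uv; case: (posnP i); lia.
by move=> /(congr1 (nth u (enum (private_part i)))); rewrite !nth_index ?mem_enum.
Qed.

Variables (b : nat) (T : nat -> nat -> nat).
Hypothesis T_table : colour_table m r b T.

Definition table_colour (v : V) : nat :=
  if [pick i | v \in e i] is Some i then T i (slot i v) else 0.

Lemma table_colour_edge i v : v \in edge e i -> table_colour v = T i (slot i v).
Proof.
case: T_table => _ T_meet _ _ vi; rewrite /table_colour; case: pickP => [j vj | no_edge]; last first.
  by have := no_edge (Ordinal (edge_lt vi)); rewrite -edge_ord vi.
rewrite -edge_ord in vj; case: (edge_common e_path vi vj) => [-> // | ji | ij].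
  by rewrite ji in vj *; rewrite (slot_next vi vj) (slot_prev vi vj) T_meet // (edge_lt vj).
by rewrite ij in vi *; rewrite (slot_next vj vi) (slot_prev vj vi) T_meet // (edge_lt vi).
Qed.

Lemma table_colour_L21 : path_L21 e table_colour.
Proof.
case: T_table => T_edge _ T_adj _; split=> i u v uv ui vi.
  rewrite !(table_colour_edge ui) (table_colour_edge vi).
  apply: T_edge; rewrite ?slot_lt ?(edge_lt ui) //.
  by apply: contra uv => /eqP /(slot_inj (edge_lt ui) ui vi) ->.
rewrite (table_colour_edge ui) (table_colour_edge vi).
have : T i (slot i u) != T i.+1 (slot i.+1 v).
  apply: T_adj; rewrite ?slot_lt ?(edge_lt vi) ?(ltnW (edge_lt vi)) //.
  apply: contra uv => /andP [/eqP u_next /eqP v_prev].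
  have [w wE] := edgeI_next e_path (edge_lt vi).
  have /setIP [wi wi'] : w \in edge e i :&: edge e i.+1 by rewrite wE set11.
  have -> : u = w by apply: (slot_inj (edge_lt wi)); rewrite // u_next slot_next.
  by have -> : v = w by apply: (slot_inj (edge_lt vi)); rewrite // v_prev (slot_prev wi).
by rewrite /natdist; lia.
Qed.

Lemma table_colour_le v : table_colour v <= b.
Proof.
case: T_table => _ _ _ T_le; rewrite /table_colour; case: pickP => // i vi.
by apply: T_le; rewrite ?slot_lt // edge_ord.
Qed.

End UpperBound.

Lemma colour_table_one r : colour_table 1 r (2 * r - 2) (fun _ s => 2 * s).
Proof. by split=> // [i s t _ _ _|i s _]; rewrite /natdist; lia. Qed.

Definition two_edge_table (r i s : nat) : nat :=
  if i == 0 then (if s == r - 1 then 0 else 2 * s + 2)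
  else if s == r - 2 then 0 else if s == r - 1 then 2 * r - 1 else 2 * s + 3.

Lemma colour_table_two r : 2 <= r -> colour_table 2 r (2 * r - 1) (two_edge_table r).
Proof.
move=> r2; split=> [i s t | i | i s t | i s] *; rewrite /two_edge_table /natdist;
  [| | apply/eqP |]; case_eqs; lia.
Qed.

(* The vertex shared by edges [i] and [i + 1] is coloured 2r-1, 1, 2r, 0 according to i mod 4,
   and the private slots of consecutive edges alternate between even and odd colours. *)
Definition periodic_table (r i s : nat) : nat :=
  let p := i %% 4 in
  if s == r - 2 then (if p == 0 then 0 else if p == 1 then 2 * r - 1 else if p == 2 then 1 else 2 * r)
  else if s == r - 1 then (if p == 0 then 2 * r - 1 else if p == 1 then 1 else if p == 2 then 2 * r else 0)
  else (if p == 0 then 2 * s + 2 else if p == 1 then 2 * s + 3 else if p == 2 then 2 * s + 4 else 2 * s + 3).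

Lemma colour_table_periodic m r : 3 <= r -> colour_table m r (2 * r) (periodic_table r).
Proof.
move=> r3; have modS i : i.+1 %% 4 = if i %% 4 == 3 then 0 else (i %% 4).+1.
  by case: eqP; lia.
have mod_lt i : i %% 4 < 4 by rewrite ltn_mod.
split=> [i s t | i | i s t | i s] *; rewrite /periodic_table /natdist ?modS; [| | apply/eqP |];
  case: (i %% 4) (mod_lt i) => [|[|[|[|p]]]] //= _; case_eqs; lia.
Qed.

Theorem theorem3p11 (V : finType) (m r : nat) (E : {set {set V}}) :
  3 <= r -> 1 <= m -> is_hyperpath m r E ->
  is_lambda E (if m == 1 then 2 * r - 2 else if m == 2 then 2 * r - 1 else 2 * r).
Proof.
move=> r3 m0 [cardE [E_card [_ [e [eE [e_inj e_path]]]]]].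
have E_edges : E = [set e i | i : 'I_m] by apply: imset_card_eq; rewrite ?card_ord.
have e_card i : #|e i| = r by apply: E_card.
have r2 : 2 <= r by apply: ltnW.
set k := (if m == 1 then _ else _).
have [T T_table] : exists T, colour_table m r k T.
  rewrite /k; case: eqP => [-> | _]; first by exists (fun _ s => 2 * s); apply: colour_table_one.
  case: eqP => [-> | _]; first by exists (two_edge_table r); apply: colour_table_two.
  by exists (periodic_table r); apply: colour_table_periodic.
apply: is_lambda_intro => [g b /(L21_pathP e_path _ E_edges) g_L21 g_le |].
  rewrite /k; case: eqP => [_ | m_ne1]; first exact (span_lb_one e_card g_L21 m0 g_le).
  have m1 : 1 < m by lia.
  case: eqP => [_ | m_ne2]; first exact (span_lb_two e_path e_card g_L21 m1 r2 g_le).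
  have m2 : 2 < m by lia.
  exact (span_lb_three e_path e_card g_L21 m2 r3 g_le).
exists (table_colour r e T); last exact (table_colour_le e_path e_card r2 T_table).
exact/(L21_pathP e_path _ E_edges)/(table_colour_L21 e_path e_card r2 T_table).
Qed.
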